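(* Suppose $f:\{0,1\}^n\to\{0,1\}$ is $\varepsilon$-far from every $k$-junta. Then for every quantum $k$-junta $V\in\mathcal{U}_N$ there exists a Boolean function $g:\{0,1\}^n\to\{0,1\}$ that is a $k$-junta such that $\mathrm{dist}(V,U_g)\le\mathrm{dist}(V,U_f)$, where $U_h:=\mathrm{diag}\big((-1)^{h(x)}\big)_{x\in\{0,1\}^n}$ for a Boolean function $h$.
   Context: $N=2^n$, $\mathcal{U}_N$ is the set of $N\times N$ unitaries. A Boolean function $h$ is a $k$-junta if $h(x)=g'(x_{i_1},\dots,x_{i_k})$ for some $g':\{0,1\}^k\to\{0,1\}$ and fixed indices; $f$ is $\varepsilon$-far from every $k$-junta if $\Pr_{x\sim\{0,1\}^n}[f(x)\ne g(x)]\ge\varepsilon$ for every $k$-junta $g$ ($x$ uniform). A unitary $V\in\mathcal{U}_N$ is a quantum $k$-junta if $V=W_S\otimes I_{\overline{S}}$ for some $S\subseteq[n]$ with $|S|=k$ and $W_S\in\mathcal{U}_{2^k}$ acting on the qubits in $S$. For $A,B\in\mathbb{C}^{N\times N}$, $\mathrm{dist}(A,B):=\min_{\theta\in[0,2\pi)}\frac{1}{\sqrt{2N}}\|e^{i\theta}A-B\|$ with $\|\cdot\|$ the Frobenius norm. *)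

From HB Require Import structures.
From mathcomp Require Import all_boot all_order all_algebra.
From mathcomp Require Import all_classical all_reals all_analysis.
From mathcomp Require Import complex.
Set Implicit Arguments. Unset Strict Implicit. Unset Printing Implicit Defensive.
Import Order.TTheory GRing.Theory Num.Theory.
Local Open Scope ring_scope.
Local Open Scope classical_set_scope.

Section QJ.
Variable R : realType.

(* computational basis labels {0,1}^n *)
Definition bits (n : nat) : finType := {ffun 'I_n -> bool}.

Definition sqmat (T : finType) := T -> T -> R[i].

Definition adj (T : finType) (A : sqmat T) : sqmat T := fun x y => conjc (A y x).
Definition mmul (T : finType) (A B : sqmat T) : sqmat T :=
  fun x y => \sum_(z : T) A x z * B z y.
Definition idm (T : finType) : sqmat T := fun x y => (x == y)%:R.

Definition unitary (T : finType) (V : sqmat T) : Prop :=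
  (forall x y, mmul V (adj V) x y = idm x y) /\
  (forall x y, mmul (adj V) V x y = idm x y).

Definition frob (T : finType) (A : sqmat T) : R :=
  Num.sqrt (\sum_(x : T) \sum_(y : T) ((@complex.Re R (A x y)) ^+ 2 + (@complex.Im R (A x y)) ^+ 2)).

Definition expi (t : R) : R[i] := (cos t +i* sin t)%C.

Definition qdist (n : nat) (A B : sqmat (bits n)) : R :=
  inf [set d : R | exists t : R, 0 <= t < 2 * pi /\
        d = (Num.sqrt (2 * (2 ^+ n)))^-1 * frob (fun x y => expi t * A x y - B x y)].

Definition junta (n k : nat) (h : bits n -> bool) : Prop :=
  exists (idx : 'I_k -> 'I_n) (g' : {ffun 'I_k -> bool} -> bool),
    forall x : bits n, h x = g' [ffun j => x (idx j)].

(* epsilon-far from every k-junta, x uniform on {0,1}^n *)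
Definition far (n k : nat) (eps : R) (f : bits n -> bool) : Prop :=
  forall g : bits n -> bool, junta k g ->
    eps <= (#|[set x : bits n | f x != g x]|%:R / (2 ^+ n) : R).

Definition restr (n : nat) (S : {set 'I_n}) (x : bits n)
  : {ffun {i : 'I_n | i \in S} -> bool} := [ffun i => x (val i)].

(* quantum k-junta: V = W_S (x) I_{S^c}, |S| = k, W_S unitary on the qubits of S *)
Definition qjunta (n k : nat) (V : sqmat (bits n)) : Prop :=
  unitary V /\
  exists (S : {set 'I_n}) (W : sqmat ({ffun {i : 'I_n | i \in S} -> bool} : finType)),
    #|S| = k /\ unitary W /\
    forall x y : bits n,
      V x y = W (restr S x) (restr S y) *
              ([forall i in ~: S, x i == y i])%:R.

Definition Uf (n : nat) (h : bits n -> bool) : sqmat (bits n) :=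
  fun x y => if x == y then (-1) ^+ h x else 0.

End QJ.

From HB Require Import structures.
From mathcomp Require Import all_boot all_order all_algebra.
From mathcomp Require Import all_classical all_reals all_analysis.
From mathcomp Require Import complex.
From mathcomp Require Import lra.
Import Order.TTheory GRing.Theory Num.Theory.
Local Open Scope ring_scope.

(* For a fixed phase t, the Boolean h minimising ||e^{it} V - U_h|| is read off
   the diagonal of V alone: h(x) is the sign of Re (e^{it} V_xx), the sign of
   (-1)^h(x) nearest to that entry.  The diagonal of a quantum k-junta
   W_S (x) I depends only on x_S, so this optimal h is a k-junta.  Hence the
   k-junta g minimising dist(V, U_g) beats U_f at every phase, so also after
   minimising over the phase. *)

Section QuantumJuntaDistance.
Context {R : realType}.

Definition sqmod (z : R[i]) : R := complex.Re z ^+ 2 + complex.Im z ^+ 2.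

Lemma sqmod_ge0 (z : R[i]) : 0 <= sqmod z.
Proof. by rewrite addr_ge0 ?sqr_ge0. Qed.

Lemma frob_le (T : finType) (A B : sqmat R T) :
  (forall x y, sqmod (A x y) <= sqmod (B x y)) -> frob A <= frob B.
Proof.
move=> leAB; rewrite ler_sqrt; last first.
  by apply: sumr_ge0 => x _; apply: sumr_ge0 => y _; apply: sqmod_ge0.
by apply: ler_sum => x _; apply: ler_sum => y _; apply: leAB.
Qed.

Definition nearest_sign (z : R[i]) : bool := complex.Re z < 0.

Lemma sqmod_sub_nearest_sign (z : R[i]) (b : bool) :
  sqmod (z - (-1) ^+ nearest_sign z) <= sqmod (z - (-1) ^+ b).
Proof.
rewrite /nearest_sign /sqmod; case: z => a c /=.
by case: ltP => ha; case: b; rewrite /= ?expr1 ?expr0 /=; lra.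
Qed.

Definition phase_dist {n : nat} (A B : sqmat R (bits n)) (t : R) : R :=
  (Num.sqrt (2 * 2 ^+ n))^-1 * frob (fun x y => expi t * A x y - B x y).

Lemma phase_dist_ge0 {n} (A B : sqmat R (bits n)) t : 0 <= phase_dist A B t.
Proof. by rewrite mulr_ge0 ?invr_ge0 ?sqrtr_ge0. Qed.

Lemma qdist_le_phase_dist {n} (A B : sqmat R (bits n)) t :
  0 <= t < 2 * pi -> qdist A B <= phase_dist A B t.
Proof.
move=> t_range; apply: ge_inf; last by exists t.
by exists 0 => _ [s [_ ->]]; apply: phase_dist_ge0.
Qed.

Lemma qdist_ge {n} (A B : sqmat R (bits n)) (c : R) :
  (forall t, 0 <= t < 2 * pi -> c <= phase_dist A B t) -> c <= qdist A B.
Proof.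
move=> lb; apply: lb_le_inf.
  by exists (phase_dist A B 0), 0; rewrite lexx mulr_gt0 ?pi_gt0.
by move=> _ [t [t_range ->]]; apply: lb.
Qed.

Definition nearest_diag_sign {n} (V : sqmat R (bits n)) (t : R) (x : bits n) :=
  nearest_sign (expi t * V x x).

Lemma phase_dist_nearest_le {n} (V : sqmat R (bits n)) (h : bits n -> bool) t :
  phase_dist V (Uf R (nearest_diag_sign V t)) t <= phase_dist V (Uf R h) t.
Proof.
rewrite ler_wpM2l ?invr_ge0 ?sqrtr_ge0 //; apply: frob_le => x y.
by rewrite /Uf; case: eqP => [<-|_]; [apply: sqmod_sub_nearest_sign|].
Qed.

Lemma qjunta_diag_junta {n k} (V : sqmat R (bits n)) (p : R[i] -> bool) :
  qjunta k V -> junta k (fun x => p (V x x)).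
Proof.
case=> _ [S [W [cardS [_ defV]]]].
pose idx (j : 'I_k) : 'I_n := enum_val (cast_ord (esym cardS) j).
pose lab (y : {ffun 'I_k -> bool}) : {ffun {i : 'I_n | i \in S} -> bool} :=
  [ffun i => y (cast_ord cardS (enum_rank_in (valP i) (val i)))].
exists idx, (fun y => p (W (lab y) (lab y))) => x; rewrite defV.
have -> : lab [ffun j => x (idx j)] = restr S x.
  by apply/ffunP => i; rewrite !ffunE /idx cast_ordK enum_rankK_in //; apply: valP.
have -> : [forall i in ~: S, x i == x i] by apply/forall_inP.
by rewrite mulr1.
Qed.

Lemma junta_argmin {n k} (F : (bits n -> bool) -> R) (h0 : bits n -> bool) :
  junta k h0 -> exists2 g, junta k g & forall h, junta k h -> F g <= F h.
Proof.
move=> jh0.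
pose P (g : {ffun bits n -> bool}) := `[< junta k g >].
have P_ffun h : junta k h -> P [ffun x => h x].
  by case=> idx [g' defh]; apply/asboolP; exists idx, g' => x; rewrite ffunE defh.
have F_ffun h : F [ffun x => h x] = F h by congr F; rewrite funeqE => x; rewrite ffunE.
have [g /asboolP jg gmin] := arg_minP (fun g : {ffun _} => F g) (P_ffun _ jh0).
by exists g => // h jh; rewrite -(F_ffun h); apply: gmin; apply: P_ffun.
Qed.

End QuantumJuntaDistance.

Theorem mainTheorem4 (R : realType) (n k : nat) (eps : R) (f : bits n -> bool) :
  far k eps f ->
  forall V : sqmat R (bits n), qjunta k V ->
  exists g : bits n -> bool, junta k g /\ qdist V (Uf R g) <= qdist V (Uf R f).
Proof.
move=> _ V qjV.
have junta_nearest t : junta k (nearest_diag_sign V t).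
  exact: (qjunta_diag_junta V (fun z => nearest_sign (expi t * z)) qjV).
have [g jg gmin] := junta_argmin (fun h => qdist V (Uf R h)) _ (junta_nearest 0).
exists g; split=> //; apply: qdist_ge => t t_range.
apply: le_trans (gmin _ (junta_nearest t)) _.
apply: le_trans (qdist_le_phase_dist _ _ _ t_range) _.
exact: phase_dist_nearest_le.
Qed.
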